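(* Let $a\in(0,1)$, $p\in(0,1)$, and let $(X_t)_{t=0,\dots,n}$ be a stationary Markov chain generated by the copula $C(u,v)=a\min(u,v)+(1-a)\max(u+v-1,0)$ and Bernoulli($p$) marginal distribution. If $a=p<1/2$ or $a=1-p\le1/2$, then $X_0,\dots,X_n$ are independent.
   Context: A stationary Markov chain $(X_t)$ is generated by a copula $C$ and a marginal cdf $F$ if each $X_t$ has cdf $F$ and $P(X_t\le x,X_{t+1}\le y)=C(F(x),F(y))$ for all $x,y$; Bernoulli($p$) means $P(X_t=1)=p=1-P(X_t=0)$. *)

From HB Require Import structures.
From mathcomp Require Import all_boot all_order all_algebra.
From mathcomp Require Import all_classical all_reals all_analysis.
Set Implicit Arguments. Unset Strict Implicit. Unset Printing Implicit Defensive.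
Import Order.TTheory GRing.Theory Num.Theory.
Local Open Scope classical_set_scope.
Local Open Scope ring_scope.

Definition copula_mix {R : realType} (a u v : R) : R :=
  a * Num.min u v + (1 - a) * Num.max (u + v - 1) 0.

Definition bernoulli_cdf {R : realType} (p x : R) : R :=
  if x < 0 then 0 else if x < 1 then 1 - p else 1.

Definition cyl {d} {T : measurableType d} {R : realType} {P : probability T R}
  (X : nat -> {RV P >-> R}) (k : nat) (x : nat -> R) : set T :=
  [set w | forall i, (i < k)%N -> X i w = x i].

Definition generated_by {d} {T : measurableType d} {R : realType}
  {P : probability T R} (X : nat -> {RV P >-> R}) (n : nat)
  (C : R -> R -> R) (F : R -> R) : Prop :=
  (forall t, (t <= n)%N -> forall x : R,
      P [set w | X t w <= x] = (F x)%:E) /\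
  (forall t, (t < n)%N -> forall x y : R,
      P [set w | X t w <= x /\ X t.+1 w <= y] = (C (F x) (F y))%:E).

(* Markov property for a chain with discrete (countable) state space:
   for every t < n and all states x_0..x_{t+1},
   P(X_0=x_0,..,X_{t+1}=x_{t+1}) P(X_t=x_t)
     = P(X_0=x_0,..,X_t=x_t) P(X_t=x_t, X_{t+1}=x_{t+1}),
   i.e. X_{t+1} is conditionally independent of (X_0..X_{t-1}) given X_t. *)
Definition markov_discrete {d} {T : measurableType d} {R : realType}
  {P : probability T R} (X : nat -> {RV P >-> R}) (n : nat) : Prop :=
  forall t, (t < n)%N -> forall x : nat -> R,
    (P (cyl X t.+2 x) * P [set w | X t w = x t] =
     P (cyl X t.+1 x) * P [set w | X t w = x t /\ X t.+1 w = x t.+1])%E.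

Definition independent_discrete {d} {T : measurableType d} {R : realType}
  {P : probability T R} (X : nat -> {RV P >-> R}) (n : nat) : Prop :=
  forall x : nat -> R,
    P (cyl X n.+1 x) = (\prod_(i < n.+1) P [set w | X i w = x i])%E.

From HB Require Import structures.
From mathcomp Require Import all_boot all_order all_algebra.
From mathcomp Require Import all_classical all_reals all_analysis.
From mathcomp Require Import ring lra zify.
Import Order.TTheory GRing.Theory Num.Theory.
Local Open Scope classical_set_scope.
Local Open Scope ring_scope.
Set Implicit Arguments. Unset Strict Implicit.

(* Almost surely every X_t takes only the values 0 and 1, so the law of a
   consecutive pair (X_t, X_{t+1}) is determined by its Bernoulli(p) marginals
   and by P(X_t <= 0, X_{t+1} <= 0) = C(1-p, 1-p).  Under either condition on
   a this number is (1-p)^2, so consecutive states are independent.  The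
   Markov property P(X_0..X_{t+1}) P(X_t) = P(X_0..X_t) P(X_t, X_{t+1}) then
   yields, by induction on t, that the joint pmf is the product of the
   marginals. *)

Section RealValuedProbability.
Context d (T : measurableType d) (R : realType) (P : probability T R).

Definition pr (A : set T) : R := fine (P A).

Lemma prE A : measurable A -> P A = (pr A)%:E.
Proof. by move=> mA; rewrite /pr fineK // fin_num_measure. Qed.

Lemma pr_ge0 A : measurable A -> 0 <= pr A.
Proof. by move=> mA; rewrite -lee_fin -prE. Qed.

Lemma pr_le A B : measurable A -> measurable B -> A `<=` B -> pr A <= pr B.
Proof. by move=> mA mB AB; rewrite -lee_fin -!prE //; apply: le_measure; rewrite ?inE. Qed.

Lemma pr_eq0_subset A B : measurable A -> measurable B -> A `<=` B ->
  pr B = 0 -> pr A = 0.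
Proof.
by move=> mA mB AB B0; apply/eqP; rewrite eq_le pr_ge0 // andbT -B0 pr_le.
Qed.

Lemma prT : pr setT = 1.
Proof. by rewrite /pr probability_setT. Qed.

Lemma prU A B : measurable A -> measurable B -> A `&` B = set0 ->
  pr (A `|` B) = pr A + pr B.
Proof.
move=> mA mB AB; apply: EFin_inj.
by rewrite EFinD -!prE ?measureU //; exact: measurableU.
Qed.

Lemma prU0 A N : measurable A -> measurable N -> pr N = 0 -> pr (A `|` N) = pr A.
Proof.
move=> mA mN N0; apply: EFin_inj; rewrite -!prE //; last exact: measurableU.
by rewrite measureU0 //; have := prE mN; rewrite N0.
Qed.

Lemma pr_eq_outside_null A B N : measurable A -> measurable B -> measurable N ->
  pr N = 0 -> (forall w, ~ N w -> A w <-> B w) -> pr A = pr B.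
Proof.
move=> mA mB mN N0 AB.
suff AN_BN : A `|` N = B `|` N by rewrite -(prU0 mA mN N0) AN_BN prU0.
apply/seteqP; split=> w [ABw|Nw]; have [Nw'|/AB ABw'] := pselect (N w);
  by [right | left; apply/ABw'].
Qed.

End RealValuedProbability.

Section LevelSets.
Context d (T : measurableType d) (R : realType) (P : probability T R).
Implicit Types (Y : {RV P >-> R}) (b c x v : R).

Definition level_set Y x := [set w | Y w = x].
Definition sublevel_set Y x := [set w | Y w <= x].

Lemma measurable_level_set Y x : measurable (level_set Y x).
Proof.
by have := measurable_funP Y measurableT _ (measurable_set1 x); rewrite setTI.
Qed.

Lemma measurable_sublevel_set Y x : measurable (sublevel_set Y x).
Proof.
have := measurable_funP Y measurableT _ (measurable_itv `]-oo, x]); rewrite setTI.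
by congr measurable; apply/seteqP; split=> w /=; rewrite in_itv.
Qed.

Lemma measurable_strict_sublevel_set Y x : measurable [set w | Y w < x].
Proof.
have := measurable_funP Y measurableT _ (measurable_itv `]-oo, x[); rewrite setTI.
by congr measurable; apply/seteqP; split=> w /=; rewrite in_itv.
Qed.

Lemma pr_lt_of_cdf_const Y b c v : b < c ->
  (forall x, b < x -> x < c -> pr P (sublevel_set Y x) = v) ->
  pr P [set w | Y w < c] = v.
Proof.
move=> bc cdf_v; pose s k := c - (c - b) / k.+2%:R.
have cb_gt0 : 0 < c - b by rewrite subr_gt0.
have s_gtb k : b < s k.
  have : (c - b) / k.+2%:R < c - b by rewrite ltr_pdivrMr ?ltr0n // ltr_pMr // ltr1n.
  by rewrite /s; set e := _ / _; lra.
have s_ltc k : s k < c by rewrite /s ltrBlDr ltrDl divr_gt0 // ltr0n.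
pose F k := sublevel_set Y (s k).
have mF k : measurable (F k) by exact: measurable_sublevel_set.
have F_nd : nondecreasing_seq F.
  move=> i j ij; apply/subsetPset => w /= /le_trans; apply.
  rewrite /s lerD2l lerN2 ler_pM2l // lef_pV2 ?posrE ?ltr0n // ler_nat; lia.
have UF : \bigcup_k F k = [set w | Y w < c].
  apply/seteqP; split=> w /=; first by move=> [k _ /le_lt_trans]; apply.
  move=> Ywc; have cY_gt0 : 0 < c - Y w by rewrite subr_gt0.
  have ratio_ge0 : 0 <= (c - b) / (c - Y w) by rewrite divr_ge0 // ltW.
  exists (Num.bound ((c - b) / (c - Y w))) => //.
  rewrite /F /sublevel_set /s /= lerBrDl -lerBrDr ler_pdivrMr ?ltr0n //.
  rewrite mulrC -ler_pdivrMr //; apply/ltW/(lt_le_trans (archi_boundP ratio_ge0)).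
  by rewrite ler_nat; lia.
have mU : measurable [set w | Y w < c] by exact: measurable_strict_sublevel_set.
have mUF : measurable (\bigcup_k F k) by rewrite UF.
have := @nondecreasing_cvg_mu _ _ _ P _ mF mUF F_nd.
have -> : P \o F = cst v%:E.
  by apply/funext => k /=; rewrite prE // cdf_v.
rewrite UF => /cvg_lim; rewrite lim_cst // => vE.
by apply: EFin_inj; rewrite -prE // vE.
Qed.

Lemma pr_level_set_of_cdf_const Y b c v : b < c ->
  (forall x, b < x -> x < c -> pr P (sublevel_set Y x) = v) ->
  pr P (level_set Y c) = pr P (sublevel_set Y c) - v.
Proof.
move=> bc cdf_v; rewrite -(pr_lt_of_cdf_const bc cdf_v).
have -> : sublevel_set Y c = [set w | Y w < c] `|` level_set Y c.
  apply/seteqP; split=> w; rewrite /sublevel_set /level_set /=.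
    by rewrite le_eqVlt => /orP[/eqP|]; auto.
  by case=> [/ltW|->].
rewrite prU; first by rewrite addrAC subrr add0r.
- exact: measurable_strict_sublevel_set.
- exact: measurable_level_set.
- by apply/seteqP; split=> // w []; rewrite /level_set /= => /[swap] ->; rewrite ltxx.
Qed.

End LevelSets.

Section Bernoulli.
Variable R : realType.
Implicit Types p x : R.

Definition bernoulli_pmf p x := if x == 0 then 1 - p else if x == 1 then p else 0.

Lemma bernoulli_pmf0 p : bernoulli_pmf p 0 = 1 - p.
Proof. by rewrite /bernoulli_pmf eqxx. Qed.

Lemma bernoulli_pmf1 p : bernoulli_pmf p 1 = p.
Proof. by rewrite /bernoulli_pmf eqxx oner_eq0. Qed.

Lemma bernoulli_pmf_out p x : x != 0 -> x != 1 -> bernoulli_pmf p x = 0.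
Proof. by rewrite /bernoulli_pmf => /negbTE-> /negbTE->. Qed.

Lemma bernoulli_cdf_lt0 p x : x < 0 -> bernoulli_cdf p x = 0.
Proof. by rewrite /bernoulli_cdf => ->. Qed.

Lemma bernoulli_cdf_01 p x : 0 <= x -> x < 1 -> bernoulli_cdf p x = 1 - p.
Proof. by move=> x_ge0 x_lt1; rewrite /bernoulli_cdf ltNge x_ge0 x_lt1. Qed.

Lemma bernoulli_cdf_ge1 p x : 1 <= x -> bernoulli_cdf p x = 1.
Proof.
by move=> x_ge1; rewrite /bernoulli_cdf !ltNge x_ge1 (le_trans ler01 x_ge1).
Qed.

End Bernoulli.

Section BernoulliRandomVariable.
Context d (T : measurableType d) (R : realType) (P : probability T R).
Variables (Y : {RV P >-> R}) (p : R).
Hypothesis cdfY : forall x, P (sublevel_set Y x) = (bernoulli_cdf p x)%:E.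

Let pr_sublevel x : pr P (sublevel_set Y x) = bernoulli_cdf p x.
Proof. by rewrite /pr cdfY. Qed.

Lemma pr_level_set_bernoulli x : pr P (level_set Y x) = bernoulli_pmf p x.
Proof.
have pr_sublevel_const b c v : b < c -> (forall y, b < y < c -> bernoulli_cdf p y = v) ->
    pr P (level_set Y c) = bernoulli_cdf p c - v.
  move=> bc cdf_v; rewrite -pr_sublevel; apply: (pr_level_set_of_cdf_const bc).
  by move=> y b_lt_y y_lt_c; rewrite pr_sublevel cdf_v // b_lt_y.
have [x_lt0|x_gt0|->] := ltgtP x 0.
- rewrite bernoulli_pmf_out ?(lt_eqF x_lt0) ?(lt_eqF (lt_trans x_lt0 ltr01)) //.
  apply: (pr_eq0_subset (measurable_level_set Y x) (measurable_sublevel_set Y x)).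
    by move=> w; rewrite /level_set /sublevel_set /= => ->.
  by rewrite pr_sublevel bernoulli_cdf_lt0.
- have [x_lt1|x_gt1|->] := ltgtP x 1.
  + rewrite bernoulli_pmf_out ?(gt_eqF x_gt0) ?(lt_eqF x_lt1) //.
    rewrite (pr_sublevel_const 0 _ (1 - p)) //.
      by rewrite bernoulli_cdf_01 ?subrr // ltW.
    by move=> y /andP[y_gt0 y_ltx]; rewrite bernoulli_cdf_01 ?ltW ?(lt_trans y_ltx).
  + rewrite bernoulli_pmf_out ?(gt_eqF x_gt0) ?(gt_eqF x_gt1) //.
    rewrite (pr_sublevel_const 1 _ 1) //.
      by rewrite bernoulli_cdf_ge1 ?subrr // ltW.
    by move=> y /andP[y_gt1 _]; rewrite bernoulli_cdf_ge1 // ltW.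
  + rewrite bernoulli_pmf1 (pr_sublevel_const 0 _ (1 - p)) ?ltr01 //.
      by rewrite bernoulli_cdf_ge1 // opprB addrC subrK.
    by move=> y /andP[y_gt0 y_lt1]; rewrite bernoulli_cdf_01 // ltW.
- rewrite bernoulli_pmf0 (pr_sublevel_const (-1) _ 0) ?ltrN10 //.
    by rewrite bernoulli_cdf_01 ?subr0.
  by move=> y /andP[_ y_lt0]; rewrite bernoulli_cdf_lt0.
Qed.

Let measurable_off01 : measurable (~` (level_set Y 0 `|` level_set Y 1)).
Proof. by apply/measurableC/measurableU; exact: measurable_level_set. Qed.

Let level_set01_disj A : (A `&` level_set Y 0) `&` (A `&` level_set Y 1) = set0.
Proof.
apply/seteqP; split=> // w [[_ Yw0] [_ Yw1]].
by move: Yw1; rewrite /level_set /= Yw0 => /esym/eqP; rewrite oner_eq0.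
Qed.

Lemma pr_off01_bernoulli : pr P (~` (level_set Y 0 `|` level_set Y 1)) = 0.
Proof.
have := prT P; rewrite -(setUCr (level_set Y 0 `|` level_set Y 1)).
rewrite !prU ?setICr //; try exact: measurable_level_set.
- by rewrite !pr_level_set_bernoulli bernoulli_pmf0 bernoulli_pmf1; lra.
- by have := level_set01_disj setT; rewrite !setTI.
- by apply: measurableU; exact: measurable_level_set.
Qed.

Lemma pr_eq_bernoulli_support A B : measurable A -> measurable B ->
  (forall w, Y w = 0 \/ Y w = 1 -> A w <-> B w) -> pr P A = pr P B.
Proof.
move=> mA mB AB; apply: (pr_eq_outside_null mA mB measurable_off01 pr_off01_bernoulli).
by move=> w /contrapT; exact: AB.
Qed.

Lemma pr_split_bernoulli A : measurable A ->
  pr P A = pr P (A `&` level_set Y 0) + pr P (A `&` level_set Y 1).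
Proof.
move=> mA; have mAY i : measurable (A `&` level_set Y i).
  by apply: measurableI => //; exact: measurable_level_set.
rewrite -prU //; apply: pr_eq_bernoulli_support => //; first exact: measurableU.
by move=> w Yw01; split=> [Aw|[[]|[]] //]; case: Yw01; [left|right].
Qed.

Lemma pr_setI_sublevel0_bernoulli A : measurable A ->
  pr P (A `&` sublevel_set Y 0) = pr P (A `&` level_set Y 0).
Proof.
move=> mA; apply: pr_eq_bernoulli_support.
- by apply: measurableI => //; exact: measurable_sublevel_set.
- by apply: measurableI => //; exact: measurable_level_set.
move=> w Yw01; rewrite /sublevel_set /level_set /=.
by case: Yw01 => ->; split=> -[Aw]; rewrite ?ler10 // => /eqP; rewrite oner_eq0.
Qed.

Lemma pr_setI_level_out_bernoulli A x : measurable A -> x != 0 -> x != 1 ->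
  pr P (A `&` level_set Y x) = 0.
Proof.
move=> mA x_ne0 x_ne1; apply: (pr_eq0_subset _ (measurable_level_set Y x) (@subIsetr _ _ _)).
  by apply: measurableI => //; exact: measurable_level_set.
by rewrite pr_level_set_bernoulli bernoulli_pmf_out.
Qed.

End BernoulliRandomVariable.

Section BernoulliPair.
Context d (T : measurableType d) (R : realType) (P : probability T R).
Variables (Y Z : {RV P >-> R}) (p r : R).
Hypothesis cdfY : forall x, P (sublevel_set Y x) = (bernoulli_cdf p x)%:E.
Hypothesis cdfZ : forall x, P (sublevel_set Z x) = (bernoulli_cdf r x)%:E.

Lemma bernoulli_pair_indep :
  pr P [set w | Y w <= 0 /\ Z w <= 0] = (1 - p) * (1 - r) ->
  forall i j, pr P (level_set Y i `&` level_set Z j) = bernoulli_pmf p i * bernoulli_pmf r j.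
Proof.
move=> cdf00; pose c i j := pr P (level_set Y i `&` level_set Z j).
have mY i := measurable_level_set Y i; have mZ j := measurable_level_set Z j.
have c00 : c 0 0 = (1 - p) * (1 - r).
  rewrite -cdf00 /c -(pr_setI_sublevel0_bernoulli cdfZ (mY 0)) setIC.
  by rewrite -(pr_setI_sublevel0_bernoulli cdfY (measurable_sublevel_set Z 0)) setIC.
have rowY i : pr P (level_set Y i) = c i 0 + c i 1 by exact: pr_split_bernoulli.
have colZ0 : pr P (level_set Z 0) = c 0 0 + c 1 0.
  by rewrite (pr_split_bernoulli cdfY (mZ 0)) /c setIC [in X in _ + X]setIC.
move: (rowY 0) (rowY 1) colZ0.
rewrite (pr_level_set_bernoulli cdfY) (pr_level_set_bernoulli cdfY).
rewrite (pr_level_set_bernoulli cdfZ) !bernoulli_pmf0 bernoulli_pmf1 => row0 row1 col0.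
move=> i j; have [/andP[i_ne0 i_ne1]|i01] := boolP ((i != 0) && (i != 1)).
  by rewrite (bernoulli_pmf_out p i_ne0 i_ne1) mul0r setIC (pr_setI_level_out_bernoulli cdfY).
have [/andP[j_ne0 j_ne1]|j01] := boolP ((j != 0) && (j != 1)).
  by rewrite (bernoulli_pmf_out r j_ne0 j_ne1) mulr0 (pr_setI_level_out_bernoulli cdfZ).
move: i01 j01; rewrite !negb_and !negbK -/(c i j).
by case/orP=> /eqP-> /orP[] /eqP->; rewrite ?bernoulli_pmf0 ?bernoulli_pmf1; lra.
Qed.

End BernoulliPair.

Section MarkovChain.
Context d (T : measurableType d) (R : realType) (P : probability T R).
Variables (X : nat -> {RV P >-> R}) (n : nat).

Lemma cylS k x : cyl X k.+1 x = cyl X k x `&` level_set (X k) (x k).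
Proof.
apply/seteqP; split=> w /=.
  by move=> Xw; split=> [i /leqW|]; exact: Xw.
by move=> [Xw Xkw] i; rewrite ltnS leq_eqVlt => /orP[/eqP->|/Xw].
Qed.

Lemma measurable_cyl k x : measurable (cyl X k x).
Proof.
elim: k => [|k IHk]; last by rewrite cylS; exact/measurableI/measurable_level_set.
by rewrite (_ : cyl X 0 x = setT) //; apply/seteqP; split=> w.
Qed.

Hypothesis markovX : markov_discrete X n.
Hypothesis consecutive_indep : forall t, (t < n)%N -> forall i j,
  pr P (level_set (X t) i `&` level_set (X t.+1) j) =
  pr P (level_set (X t) i) * pr P (level_set (X t.+1) j).

Lemma pr_cyl_markov_indep x k : (k <= n)%N ->
  pr P (cyl X k.+1 x) = \prod_(i < k.+1) pr P (level_set (X i) (x i)).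
Proof.
elim: k => [_|k IHk k_lt_n].
  rewrite big_ord1 cylS; congr (pr P); apply/seteqP; split=> w //=.
  by move=> [].
have mXk := measurable_level_set (X k) (x k).
have mXkk : measurable (level_set (X k) (x k) `&` level_set (X k.+1) (x k.+1)).
  by apply: measurableI; exact: measurable_level_set.
have := markovX k_lt_n x.
rewrite (prE P (measurable_cyl k.+2 x)) (prE P (measurable_cyl k.+1 x)) (prE P mXk) (prE P mXkk).
rewrite -!EFinM => -[]; rewrite consecutive_indep // IHk; last exact: ltnW.
move=> markov_k.
have [pr_k0|pr_k_neq0] := eqVneq (pr P (level_set (X k) (x k))) 0.
  rewrite 2!big_ord_recr /= pr_k0 mulr0 mul0r.
  apply: (pr_eq0_subset (measurable_cyl _ _) mXk _ pr_k0).
  by move=> w /= Xw; apply: Xw.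
by apply: (mulIf pr_k_neq0); rewrite markov_k [in RHS]big_ord_recr /=; ring.
Qed.

Lemma markov_consecutive_indep_independent : independent_discrete X n.
Proof.
move=> x; rewrite (prE P (measurable_cyl _ _)) pr_cyl_markov_indep // -prodEFin.
by apply: eq_bigr => i _; rewrite (prE P (measurable_level_set _ _)).
Qed.

End MarkovChain.

Lemma copula_mix_indep_diag (R : realType) (a p : R) : 0 < p < 1 ->
  (a = p /\ p < 1 / 2) \/ (a = 1 - p /\ 1 - p <= 1 / 2) ->
  copula_mix a (1 - p) (1 - p) = (1 - p) * (1 - p).
Proof.
move=> /andP[p_gt0 p_lt1] [[-> p_lt_half]|[-> q_le_half]]; rewrite /copula_mix minxx.
  by rewrite max_l; [ring | lra].
by rewrite max_r; [ring | lra].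
Qed.

Theorem proposition5 (d : measure_display) (T : measurableType d)
  (R : realType) (P : probability T R) (n : nat)
  (X : nat -> {RV P >-> R}) (a p : R) :
  0 < a < 1 -> 0 < p < 1 ->
  markov_discrete X n ->
  generated_by X n (copula_mix a) (bernoulli_cdf p) ->
  (a = p /\ p < 1 / 2) \/ (a = 1 - p /\ 1 - p <= 1 / 2) ->
  independent_discrete X n.
Proof.
move=> _ p01 markovX [cdfX copulaX] ap.
apply: markov_consecutive_indep_independent markovX _ => t t_lt_n i j.
have cdfXt := cdfX t (ltnW t_lt_n); have cdfXt1 := cdfX t.+1 t_lt_n.
rewrite (pr_level_set_bernoulli cdfXt) (pr_level_set_bernoulli cdfXt1).
apply: (bernoulli_pair_indep cdfXt cdfXt1).
by rewrite /pr copulaX // bernoulli_cdf_01 ?copula_mix_indep_diag.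
Qed.
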